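(* Let $M,N$ be matroids on a common set $E$ and $W:=W(M,N)$. Then every element of $B(M,N,W)$ is a nice feasible set (with respect to $(M,N)$).
   Context: Matroids are possibly infinite. $M^*$ dual, $M\upharpoonright X$ restriction, $M/X:=(M^*\upharpoonright(E\setminus X))^*$ (on $E\setminus X$), $M.X:=M/(E\setminus X)$. A loop is an element $e$ with $\{e\}$ dependent; $r(K)=0$ means the empty set is a base of $K$. $W$ is an $(M,N)$-wave if $M\upharpoonright W$ has a base independent in $N.W$; the union of all waves is a wave, denoted $W(M,N)$. $B(M,N,X)$ is the set of common bases of $M\upharpoonright X$ and $N.X$. $\mathsf{cond}(M,N)$: for every $(M,N)$-wave $W$, $N.W$ has an $M$-independent base. $\mathsf{cond}^+(M,N)$: $W(M,N)$ consists of $M$-loops and $r(N.W(M,N))=0$. A set $I$ independent in both $M$ and $N$ is feasible if $\mathsf{cond}(M/I,N/I)$ holds, and nice feasible if moreover $\mathsf{cond}^+(M/I,N/I)$ holds. *)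

Set Implicit Arguments.

Definition set (T : Type) := T -> Prop.

Section Sets.
Variable T : Type.
Definition subset (A B : set T) : Prop := forall x, A x -> B x.
Definition setI (A B : set T) : set T := fun x => A x /\ B x.
Definition setU (A B : set T) : set T := fun x => A x \/ B x.
Definition setD (A B : set T) : set T := fun x => A x /\ ~ B x.
Definition set0 : set T := fun _ => False.
Definition set1 (a : T) : set T := fun x => x = a.
End Sets.

Record matroid (T : Type) := Matroid {
  ground : set T;
  indep : set T -> Prop }.

Section Matroids.
Variable T : Type.
Implicit Types (M N : matroid T) (I J B X W : set T).

Definition base M B : Prop :=
  indep M B /\ forall J, indep M J -> subset B J -> subset J B.

(* Independence axioms for (possibly infinite) matroids
   (Bruhn, Diestel, Kriesell, Pendavingh, Wollan): (I1),(I2),(I3),(IM). *)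
Definition is_matroid M : Prop :=
  (forall I, indep M I -> subset I (ground M)) /\
  indep M (@set0 T) /\
  (forall I J, indep M J -> subset I J -> indep M I) /\
  (forall I B, indep M I -> ~ base M I -> base M B ->
     exists x, B x /\ ~ I x /\ indep M (setU I (set1 x))) /\
  (forall I X, indep M I -> subset I X -> subset X (ground M) ->
     exists J, indep M J /\ subset I J /\ subset J X /\
       (forall J', indep M J' -> subset J J' -> subset J' X -> subset J' J)).

Definition dual M : matroid T :=
  Matroid (ground M)
    (fun I => subset I (ground M) /\
       exists B, base M B /\ subset I (setD (ground M) B)).

Definition restrict M X : matroid T :=
  Matroid (setI X (ground M)) (fun I => indep M I /\ subset I X).

Definition contract M X : matroid T :=
  dual (restrict (dual M) (setD (ground M) X)).

Definition contract_to M X : matroid T :=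
  contract M (setD (ground M) X).

Definition loop M e : Prop := ground M e /\ ~ indep M (set1 e).

Definition rank_zero M : Prop := base M (@set0 T).

Definition wave M N W : Prop :=
  subset W (ground M) /\
  exists B, base (restrict M W) B /\ indep (contract_to N W) B.

Definition Wave M N : set T := fun x => exists W, wave M N W /\ W x.

Definition Bset M N X : set T -> Prop :=
  fun B => base (restrict M X) B /\ base (contract_to N X) B.

Definition cond M N : Prop :=
  forall W, wave M N W ->
    exists B, base (contract_to N W) B /\ indep M B.

Definition cond_plus M N : Prop :=
  (forall x, Wave M N x -> loop M x) /\
  rank_zero (contract_to N (Wave M N)).

Definition feasible M N I : Prop :=
  indep M I /\ indep N I /\ cond (contract M I) (contract N I).

Definition nice_feasible M N I : Prop :=
  feasible M N I /\ cond_plus (contract M I) (contract N I).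

End Matroids.

From Stdlib Require Import Classical.

(* We show that I
   is nice feasible: every (M/I,N/I)-wave lies inside W (given such a wave
   W' with witness B', the set W u W' is an (M,N)-wave with witness I u B'),
   and for every U included in W the matroid (N/I).U has rank zero (an
   element j of an independent set of (N/I).U would make I + j independent
   in N.W, against the maximality of I).  Both facts together give cond and
   cond+ for (M/I,N/I), taking the empty set as the required base. *)

Section MatroidBasics.
Context {T : Type}.
Implicit Types (L Z B X : set T).
Context {K : matroid T}.
Hypothesis HK : is_matroid K.

Lemma indep_ground [I] : indep K I -> subset I (ground K).
Proof. apply (proj1 HK). Qed.

Lemma indep_empty : indep K (@set0 T).
Proof. apply (proj1 (proj2 HK)). Qed.

Lemma indep_subset [I J] : indep K J -> subset I J -> indep K I.
Proof. apply (proj1 (proj2 (proj2 HK))). Qed.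

Lemma indep_augment [I B] : indep K I -> ~ base K I -> base K B ->
  exists x, B x /\ ~ I x /\ indep K (setU I (set1 x)).
Proof. apply (proj1 (proj2 (proj2 (proj2 HK)))). Qed.

Lemma indep_maximal [I X] : indep K I -> subset I X -> subset X (ground K) ->
  exists J, indep K J /\ subset I J /\ subset J X /\
    (forall J', indep K J' -> subset J J' -> subset J' X -> subset J' J).
Proof. apply (proj2 (proj2 (proj2 (proj2 HK)))). Qed.

Lemma extend_base [I] : indep K I -> exists B, base K B /\ subset I B.
Proof.
  intros HI.
  destruct (indep_maximal HI (indep_ground HI) (fun x Hx => Hx))
    as [B [HB [HIB [_ Hmax]]]].
  exists B; split; [split|]; auto.
  intros J HJ HBJ; apply Hmax; auto; apply indep_ground; auto.
Qed.

(* If [Z] contains some base, every independent subset of [Z] extends to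
   a base inside [Z]: a maximal one cannot be augmented from that base. *)
Lemma extend_base_within [L Z B] : indep K L -> subset L Z -> subset Z (ground K) ->
  base K B -> subset B Z -> exists L', base K L' /\ subset L L' /\ subset L' Z.
Proof.
  intros HL HLZ HZ HB HBZ.
  destruct (indep_maximal HL HLZ HZ) as [L' [HL' [HLL' [HL'Z Hmax]]]].
  exists L'; split; [|split; assumption].
  apply NNPP; intro Hnb.
  destruct (indep_augment HL' Hnb HB) as [x [HBx [HL'x Hx]]].
  apply HL'x, (Hmax _ Hx); [intros y Hy; left; exact Hy| |right; reflexivity].
  intros y [Hy| ->]; [exact (HL'Z y Hy)|exact (HBZ x HBx)].
Qed.

Lemma extend_base_restrict [L0 X] : indep K L0 -> subset L0 X ->
  exists L, base (restrict K X) L /\ subset L0 L.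
Proof.
  intros H0 HX.
  destruct (indep_maximal (X := setI X (ground K)) H0) as [L [HL [HL0 [HLX Hmax]]]].
  - intros x Hx; split; [auto|apply (indep_ground H0); auto].
  - intros x [_ Hx]; auto.
  - exists L; split; [|auto]. split.
    + split; [auto|intros x Hx; apply HLX; auto].
    + intros J [HJ HJX] HLJ. apply Hmax; auto.
      intros x Hx; split; [auto|apply (indep_ground HJ); auto].
Qed.

Lemma exists_base_restrict X : exists L, base (restrict K X) L.
Proof.
  destruct (extend_base_restrict indep_empty (X := X)) as [L [HL _]].
  - intros x [].
  - eauto.
Qed.

End MatroidBasics.

Section Contraction.
Context {T : Type}.
Context {K : matroid T}.
Hypothesis HK : is_matroid K.

(* A base C of K*|Y that avoids a base B of K contains every element of
   Y outside B: adding such an element keeps C co-independent. *)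
Lemma cobase_absorb [Y C B : set T] [y : T] :
  base (restrict (dual K) Y) C -> base K B -> subset C (setD (ground K) B) ->
  Y y -> ground K y -> ~ B y -> C y.
Proof.
  intros [[_ HCY] Hmax] HB HCB Hy Hgy HBy.
  apply (Hmax (setU C (set1 y))); [| intros z Hz; left; exact Hz | right; reflexivity].
  simpl; split; [split|].
  - intros z [Hz| ->]; [apply (HCB z Hz)|exact Hgy].
  - exists B; split; [exact HB|].
    intros z [Hz| ->]; [apply (HCB z Hz)|split; assumption].
  - intros z [Hz| ->]; [apply (HCY z Hz)|exact Hy].
Qed.

(* For maximality, a larger
   co-independent set would contain some y in B\X; then B - y extends,
   inside X + (B - y), to a base lying in B, so the base B would be
   contained in it, which is absurd since y is missing. *)
Lemma cobase_complement [X B L : set T] :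
  base K B -> base (restrict K X) L -> subset L B ->
  base (restrict (dual K) (setD (ground K) X))
       (fun x => ground K x /\ ~ X x /\ ~ B x).
Proof.
  intros HB [[HL HLX] HLmax] HLB.
  split.
  - split; [split|].
    + intros x [Hx _]; exact Hx.
    + exists B; split; [exact HB|]. intros x [Hx [_ HBx]]; split; assumption.
    + intros x [Hx [HXx _]]; split; assumption.
  - intros C' [[_ [B' [HB' HC'B']]] HC'X] HCC' y Hy.
    destruct (HC'X y Hy) as [Hgy HXy].
    split; [exact Hgy|split; [exact HXy|intro HBy]].
    set (Z := fun x => (X x /\ ground K x) \/ (B x /\ x <> y)).
    assert (HB'Z : subset B' Z).
    { intros b Hb. destruct (classic (X b)) as [HXb|HXb].
      - left; split; [exact HXb|apply (indep_ground HK (proj1 HB') _ Hb)].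
      - right; split.
        + apply NNPP; intro HnB. apply (HC'B' b); [|exact Hb].
          apply HCC'. split; [apply (indep_ground HK (proj1 HB') _ Hb)|split; assumption].
        + intro Heq; subst b. apply (HC'B' y Hy); exact Hb. }
    assert (HZE : subset Z (ground K)).
    { intros x [[_ Hx]|[Hx _]]; [exact Hx|exact (indep_ground HK (proj1 HB) _ Hx)]. }
    destruct (extend_base_within HK (L := fun x => B x /\ x <> y)
                (indep_subset HK (proj1 HB) (fun x Hx => proj1 Hx))
                (fun x Hx => or_intror Hx) HZE HB' HB'Z) as [L' [HL' [HBL' HL'Z]]].
    assert (HL'B : subset L' B).
    { intros x Hx. destruct (classic (X x)) as [HXx|HXx].
      - apply HLB, (HLmax (fun z => L' z /\ X z)); [| |split; assumption].
        + split; [apply (indep_subset HK (proj1 HL')); intros z [Hz _]; exact Hz|].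
          intros z [_ Hz]; exact Hz.
        + intros z Hz; split; [|apply (HLX z Hz)].
          apply HBL'; split; [apply (HLB z Hz)|intro; subst; apply HXy, HLX, Hz].
      - destruct (HL'Z x Hx) as [[HXx' _]|[HBx _]]; [contradiction|exact HBx]. }
    destruct (HL'Z y (proj2 HL' B (proj1 HB) HL'B y HBy)) as [[HXy' _]|[_ Hne]].
    + exact (HXy HXy').
    + exact (Hne eq_refl).
Qed.

Lemma contract_indep_sub [X J : set T] :
  indep (contract K X) J -> subset J (setD (ground K) X).
Proof. intros [HJ _] x Hx; apply (HJ x Hx). Qed.

(* J (avoiding X) is independent in K/X as soon as J + L is independent
   for a base L of K|X; the co-independent witness is the one given by
   cobase_complement for a base of K containing J + L. *)
Lemma contract_indep_of_base [X J L : set T] :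
  subset J (setD (ground K) X) -> base (restrict K X) L ->
  indep K (setU J L) -> indep (contract K X) J.
Proof.
  intros HJX HL HJL.
  destruct (extend_base HK HJL) as [B [HB HJLB]].
  pose proof (cobase_complement HB HL (fun x Hx => HJLB x (or_intror Hx))) as HC.
  unfold contract, dual; simpl; split.
  - intros x Hx; split; [apply (HJX x Hx)|apply (HJX x Hx)].
  - exists (fun x => ground K x /\ ~ X x /\ ~ B x); split; [exact HC|].
    intros x Hx; destruct (HJX x Hx) as [Hgx HXx].
    split; [split; [split; assumption|exact Hgx]|].
    intros [_ [_ HBx]]; apply HBx, HJLB; left; exact Hx.
Qed.

(* Conversely, an independent set J of K/X stays independent together with
   any independent L inside X: extend L inside X + B to a base L', where B
   is the base witnessing J; the cobase witnessing J then absorbs every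
   element of J outside L', so J lies in L'. *)
Lemma contract_indep_union [X J L : set T] :
  indep (contract K X) J -> indep K L -> subset L X -> indep K (setU J L).
Proof.
  unfold contract, dual; simpl.
  intros [HJg [C [HC HJC]]] HL HLX.
  pose proof HC as [[[_ [B [HB HCB]]] HCX] _].
  set (Z := fun x => (X x /\ ground K x) \/ B x).
  assert (HLZ : subset L Z).
  { intros x Hx; left; split; [apply (HLX x Hx)|apply (indep_ground HK HL x Hx)]. }
  assert (HZE : subset Z (ground K)).
  { intros x [[_ Hx]|Hx]; [exact Hx|exact (indep_ground HK (proj1 HB) x Hx)]. }
  destruct (extend_base_within HK HL HLZ HZE HB (fun x Hx => or_intror Hx))
    as [L' [HL' [HLL' HL'Z]]].
  apply (indep_subset HK (proj1 HL')).
  intros x [Hx|Hx]; [|exact (HLL' x Hx)].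
  apply NNPP; intro HL'x.
  destruct (HJg x Hx) as [[Hgx HXx] _].
  apply (proj2 (HJC x Hx)).
  apply (cobase_absorb HC HL'); [|split; assumption|exact Hgx|exact HL'x].
  intros c Hc; destruct (HCX c Hc) as [Hgc HXc]; split; [exact Hgc|intro HL'c].
  destruct (HL'Z c HL'c) as [[HXc' _]|HBc]; [exact (HXc HXc')|exact (proj2 (HCB c Hc) HBc)].
Qed.

Lemma contract_indep_empty (X : set T) : indep (contract K X) (@set0 T).
Proof.
  destruct (exists_base_restrict HK X) as [L HL].
  apply (contract_indep_of_base (L := L)); [intros x []|exact HL|].
  apply (indep_subset HK (proj1 (proj1 HL))). intros x [[]|Hx]; exact Hx.
Qed.

Lemma contract_indep_indep [X J : set T] : indep (contract K X) J -> indep K J.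
Proof.
  intros HJ.
  assert (Hempty : subset (@set0 T) X) by (intros x []).
  apply (indep_subset HK (contract_indep_union HJ (indep_empty HK) Hempty)).
  intros x Hx; left; exact Hx.
Qed.

(* Contraction of an independent set I: J is independent in K/I exactly when
   J avoids I and J + I is independent in K; through this description the
   independence axioms transfer from K to K/I. *)
Section IndependentContraction.
Context {I : set T}.
Hypothesis HI : indep K I.

Lemma contract_indep_iff (J : set T) :
  indep (contract K I) J <-> subset J (setD (ground K) I) /\ indep K (setU J I).
Proof.
  split.
  - intros HJ; split; [exact (contract_indep_sub HJ)|].
    exact (contract_indep_union HJ HI (fun x Hx => Hx)).
  - intros [HJI HJ]. apply (contract_indep_of_base (L := I) HJI); [|exact HJ].
    split; [split; [exact HI|intros x Hx; exact Hx]|intros J' [_ HJ'] _; exact HJ'].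
Qed.

Lemma contract_base_union [B : set T] : base (contract K I) B -> base K (setU B I).
Proof.
  intros [HB HBmax]. apply contract_indep_iff in HB as [HBE HBI].
  split; [exact HBI|intros L HL HBL].
  assert (HLB : subset (fun x => L x /\ ~ I x) B).
  { apply HBmax.
    - apply contract_indep_iff; split.
      + intros x [Hx HIx]; split; [exact (indep_ground HK HL x Hx)|exact HIx].
      + apply (indep_subset HK HL). intros x [[Hx _]|Hx]; [exact Hx|apply HBL; right; exact Hx].
    - intros x Hx; split; [apply HBL; left; exact Hx|apply (HBE x Hx)]. }
  intros x Hx. destruct (classic (I x)) as [HIx|HIx]; [right; exact HIx|].
  left; apply HLB; split; assumption.
Qed.

(* Axiom (I3) for K/I, obtained by augmenting J + I from B + I in K. *)
Lemma contract_augment (J B : set T) : indep (contract K I) J -> ~ base (contract K I) J ->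
  base (contract K I) B -> exists x, B x /\ ~ J x /\ indep (contract K I) (setU J (set1 x)).
Proof.
  intros HJ Hnb HB. pose proof HJ as HJ'. apply contract_indep_iff in HJ' as [HJE HJI].
  assert (HnbK : ~ base K (setU J I)).
  { intros [_ Hmax]. apply Hnb. split; [exact HJ|]. intros J' HJ' HJJ' x Hx.
    apply contract_indep_iff in HJ' as [HJ'E HJ'I].
    assert (Hsub : subset (setU J' I) (setU J I)).
    { apply (Hmax _ HJ'I). intros y [Hy|Hy]; [left; apply HJJ', Hy|right; exact Hy]. }
    destruct (Hsub x (or_introl Hx)) as [HJx|HIx]; [exact HJx|].
    exfalso; exact (proj2 (HJ'E x Hx) HIx). }
  destruct (indep_augment HK HJI HnbK (contract_base_union HB)) as [x [HBx [HJx Hind]]].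
  assert (HxB : B x).
  { destruct HBx as [HBx|HIx]; [exact HBx|exfalso; apply HJx; right; exact HIx]. }
  exists x; split; [exact HxB|split; [intro; apply HJx; left; assumption|]].
  apply contract_indep_iff; split.
  - intros y [Hy| ->]; [exact (HJE y Hy)|exact (contract_indep_sub (proj1 HB) x HxB)].
  - apply (indep_subset HK Hind).
    intros y [[Hy|Hy]|Hy]; [left; left; exact Hy|right; exact Hy|left; right; exact Hy].
Qed.

(* Axiom (IM) for K/I: take a maximal independent set of K between
   J + I and X + I and remove I. *)
Lemma contract_maximal (J X : set T) : indep (contract K I) J -> subset J X ->
  subset X (ground (contract K I)) ->
  exists J0, indep (contract K I) J0 /\ subset J J0 /\ subset J0 X /\
    (forall J', indep (contract K I) J' -> subset J0 J' -> subset J' X -> subset J' J0).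
Proof.
  simpl. intros HJ HJX HXE. apply contract_indep_iff in HJ as [HJE HJI].
  destruct (indep_maximal HK (X := setU X I) HJI) as [L [HL [HJL [HLX Hmax]]]].
  { intros x [Hx|Hx]; [left; exact (HJX x Hx)|right; exact Hx]. }
  { intros x [Hx|Hx]; [exact (proj2 (HXE x Hx))|exact (indep_ground HK HI x Hx)]. }
  exists (fun x => L x /\ ~ I x); split; [|split; [|split]].
  - apply contract_indep_iff; split.
    + intros x [Hx HIx]; split; [exact (indep_ground HK HL x Hx)|exact HIx].
    + apply (indep_subset HK HL). intros x [[Hx _]|Hx]; [exact Hx|apply HJL; right; exact Hx].
  - intros x Hx; split; [apply HJL; left; exact Hx|exact (proj2 (HJE x Hx))].
  - intros x [HLx HIx]. destruct (HLX x HLx) as [HXx|HIx']; [exact HXx|contradiction].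
  - intros J' HJ' HLJ' HJ'X. apply contract_indep_iff in HJ' as [HJ'E HJ'I].
    assert (HS : subset (setU J' I) L).
    { apply (Hmax _ HJ'I).
      - intros x Hx. destruct (classic (I x)) as [HIx|HIx]; [right; exact HIx|].
        left; apply HLJ'; split; assumption.
      - intros x [Hx|Hx]; [left; exact (HJ'X x Hx)|right; exact Hx]. }
    intros x Hx; split; [apply HS; left; exact Hx|exact (proj2 (HJ'E x Hx))].
Qed.

Theorem contract_is_matroid : is_matroid (contract K I).
Proof.
  split; [|split; [|split; [|split]]].
  - intros J HJ x Hx. simpl. destruct (contract_indep_sub HJ x Hx) as [Hgx HIx].
    split; [split; assumption|exact Hgx].
  - apply contract_indep_empty.
  - intros J J' HJ' HJJ'. apply contract_indep_iff in HJ' as [HJ'E HJ'I].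
    apply contract_indep_iff; split.
    + intros x Hx; exact (HJ'E x (HJJ' x Hx)).
    + apply (indep_subset HK HJ'I). intros x [Hx|Hx]; [left; exact (HJJ' x Hx)|right; exact Hx].
  - exact contract_augment.
  - exact contract_maximal.
Qed.

End IndependentContraction.

End Contraction.

Section CommonBaseOfWave.
Context {T : Type} {M N : matroid T}.
Hypothesis HM : is_matroid M.
Hypothesis HN : is_matroid N.
Context {I : set T}.
Hypothesis HIM : base (restrict M (Wave M N)) I.
Hypothesis HIN : base (contract_to N (Wave M N)) I.

Lemma indep_M_I : indep M I.
Proof. exact (proj1 (proj1 HIM)). Qed.

Lemma I_inside_wave : subset I (Wave M N).
Proof. exact (proj2 (proj1 HIM)). Qed.

Lemma indep_N_I : indep N I.
Proof. exact (contract_indep_indep HN (proj1 HIN)). Qed.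

(* Independent sets of N avoiding W stay independent in N/I, because I is
   independent in N.W = N/(E\W). *)
Lemma outside_wave_indep_contract [L : set T] :
  indep N L -> subset L (setD (ground N) (Wave M N)) -> indep (contract N I) L.
Proof.
  intros HL HLW. apply (contract_indep_iff HN indep_N_I); split.
  - intros x Hx; split; [exact (indep_ground HN HL x Hx)|].
    intro HIx; exact (proj2 (HLW x Hx) (I_inside_wave x HIx)).
  - apply (indep_subset HN (contract_indep_union HN (proj1 HIN) HL HLW)).
    intros x [Hx|Hx]; [right|left]; exact Hx.
Qed.

(* The transfer lemma: if W and U lie in Y, an independent set J of (N/I).U
   yields the independent set I + J of N.Y.  It is tested against a base L0
   of N|(E\Y), which is independent in N/I and avoids U, so that J + L0 + I
   is independent in N. *)
Lemma contract_to_lift [Y U J : set T] : subset (Wave M N) Y -> subset U Y ->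
  indep (contract_to (contract N I) U) J -> indep (contract_to N Y) (setU I J).
Proof.
  intros HWY HUY HJ.
  destruct (exists_base_restrict HN (setD (ground N) Y)) as [L0 HL0].
  pose proof HL0 as [[HL0i HL0Y] _].
  assert (HL0W : subset L0 (setD (ground N) (Wave M N))).
  { intros x Hx; destruct (HL0Y x Hx) as [Hgx HYx].
    split; [exact Hgx|intro HWx; exact (HYx (HWY x HWx))]. }
  assert (HL0U : subset L0 (setD (ground (contract N I)) U)).
  { intros x Hx; destruct (HL0Y x Hx) as [Hgx HYx].
    split; [split; [split; [exact Hgx|]|exact Hgx]|intro HUx; exact (HYx (HUY x HUx))].
    intro HIx; exact (HYx (HWY x (I_inside_wave x HIx))). }
  pose proof (contract_indep_union (contract_is_matroid HN indep_N_I) HJ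
                (outside_wave_indep_contract HL0i HL0W) HL0U) as HJL0.
  apply (contract_indep_iff HN indep_N_I) in HJL0 as [_ HJL0I].
  apply (contract_indep_of_base HN (L := L0)); [|exact HL0|].
  - intros x [Hx|Hx]; split.
    + exact (indep_ground HN indep_N_I x Hx).
    + intros [_ HYx]; exact (HYx (HWY x (I_inside_wave x Hx))).
    + destruct (contract_indep_sub HJ x Hx) as [[[Hgx _] _] _]; exact Hgx.
    + intros [_ HYx]; apply HYx, HUY.
      destruct (contract_indep_sub HJ x Hx) as [Hgx HnU].
      apply NNPP; intro HUx; exact (HnU (conj Hgx HUx)).
  - apply (indep_subset HN HJL0I).
    intros x [[Hx|Hx]|Hx]; [right; exact Hx|left; left; exact Hx|left; right; exact Hx].
Qed.

(* For U inside W, (N/I).U has rank zero: an element j of an independent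
   set of (N/I).U would make I + j independent in N.W, against the
   maximality of I. *)
Lemma rank_zero_inside_wave [U : set T] : subset U (Wave M N) ->
  rank_zero (contract_to (contract N I) U).
Proof.
  intros HUW. split; [exact (contract_indep_empty (contract_is_matroid HN indep_N_I) _)|].
  intros J HJ _ j Hj.
  pose proof (contract_to_lift (fun x Hx => Hx) HUW HJ) as HIJ.
  destruct (contract_indep_sub HJ j Hj) as [[[_ HIj] _] _].
  apply HIj, (proj2 HIN _ HIJ (fun x Hx => or_introl Hx)). right; exact Hj.
Qed.

(* A base B' of (M/I)|W' gives the base I + B' of M|(W + W'): an element of
   W is absorbed by the maximality of I in M|W, an element of W' \ W by the
   maximality of B' in (M/I)|W'. *)
Lemma base_union_wave [W' B' : set T] : base (restrict (contract M I) W') B' ->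
  base (restrict M (setU (Wave M N) W')) (setU I B').
Proof.
  intros [[HB'i HB'W'] HB'max].
  destruct (proj1 (contract_indep_iff HM indep_M_I B') HB'i) as [HB'E HB'I].
  split; [split|].
  - apply (indep_subset HM HB'I). intros x [Hx|Hx]; [right|left]; exact Hx.
  - intros x [Hx|Hx]; [left; exact (I_inside_wave x Hx)|right; exact (HB'W' x Hx)].
  - intros L [HL HLW] HIBL y Hy.
    destruct (classic (Wave M N y)) as [HWy|HnWy].
    + left. apply (proj2 HIM (setU I (set1 y))); [split| |right; reflexivity].
      * apply (indep_subset HM HL). intros z [Hz| ->]; [apply HIBL; left; exact Hz|exact Hy].
      * intros z [Hz| ->]; [exact (I_inside_wave z Hz)|exact HWy].
      * intros z Hz; left; exact Hz.
    + right. destruct (HLW y Hy) as [HWy|HW'y]; [contradiction|].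
      apply (HB'max (setU B' (set1 y))); [split| |right; reflexivity].
      * apply (contract_indep_iff HM indep_M_I); split.
        -- intros z [Hz| ->]; [exact (HB'E z Hz)|split].
           ++ exact (indep_ground HM HL y Hy).
           ++ intro HIy; exact (HnWy (I_inside_wave y HIy)).
        -- apply (indep_subset HM HL).
           intros z [[Hz| ->]|Hz]; [apply HIBL; right; exact Hz|exact Hy|].
           apply HIBL; left; exact Hz.
      * intros z [Hz| ->]; [exact (HB'W' z Hz)|exact HW'y].
      * intros z Hz; left; exact Hz.
Qed.

(* Every (M/I,N/I)-wave W' lies in W, because W + W' is an (M,N)-wave with
   witness I + B' for any witness B' of W'. *)
Lemma contract_wave_inside [W' : set T] :
  wave (contract M I) (contract N I) W' -> subset W' (Wave M N).
Proof.
  intros [HW'E [B' [HB' HB'N]]] x Hx.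
  exists (setU (Wave M N) W'); split; [|right; exact Hx].
  split.
  - intros y [[W0 [[HW0E _] Hy]]|Hy]; [exact (HW0E y Hy)|].
    destruct (HW'E y Hy) as [[Hgy _] _]; exact Hgy.
  - exists (setU I B'); split; [exact (base_union_wave HB')|].
    exact (contract_to_lift (fun y Hy => or_introl Hy) (fun y Hy => or_intror Hy) HB'N).
Qed.

Lemma contract_Wave_inside :
  subset (Wave (contract M I) (contract N I)) (Wave M N).
Proof. intros x [W' [HW' Hx]]; exact (contract_wave_inside HW' x Hx). Qed.

(* Elements of W(M/I,N/I) are loops of M/I: a non-loop x would lie in W
   and make I + x independent in M|W. *)
Lemma contract_Wave_loops (x : T) :
  Wave (contract M I) (contract N I) x -> loop (contract M I) x.
Proof.
  intros Hx. pose proof (contract_Wave_inside x Hx) as HWx.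
  destruct Hx as [W' [HW' HW'x]].
  pose proof (proj1 HW' x HW'x) as Hgx. split; [exact Hgx|intro Hind].
  destruct Hgx as [[_ HIx] _]. apply HIx.
  apply (proj2 HIM (setU I (set1 x))); [split| |right; reflexivity].
  - apply (indep_subset HM (proj2 (proj1 (contract_indep_iff HM indep_M_I _) Hind))).
    intros y [Hy|Hy]; [right|left]; exact Hy.
  - intros y [Hy| ->]; [exact (I_inside_wave y Hy)|exact HWx].
  - intros y Hy; left; exact Hy.
Qed.

End CommonBaseOfWave.

Theorem mainTheorem8 (T : Type) (M N : matroid T) :
  is_matroid M -> is_matroid N -> ground M = ground N ->
  forall I : set T, Bset M N (Wave M N) I -> nice_feasible M N I.
Proof.
  intros HM HN _ I [HIM HIN].
  split; [split; [|split]|split].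
  - exact (indep_M_I HIM).
  - exact (indep_N_I HN HIN).
  - intros W' HW'. exists (@set0 T); split.
    + exact (rank_zero_inside_wave HN HIM HIN (contract_wave_inside HM HN HIM HIN HW')).
    + exact (contract_indep_empty HM I).
  - exact (contract_Wave_loops HM HN HIM HIN).
  - exact (rank_zero_inside_wave HN HIM HIN (contract_Wave_inside HM HN HIM HIN)).
Qed.
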